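(* Let $G=(V,E)$ be a graph with maximum degree at most $\Delta$, let $\beta>20$ with $L=\log_\beta\Delta$ an integer, let $\ell:V\to\{4,\dots,L\}$ be any level assignment, and let $\chi:V\to\mathcal{C}=\{1,\dots,\Delta+1\}$ be any coloring. For any vertex $x$ with $\ell(x)=i$, we have $|B_x\cup U_x|\ge 1+\frac{|\mathcal{N}_x(4,i-1)|}{2}$.
   Context: For a vertex $v$ and $i\le j$, $\mathcal{N}_v(i,j)=\{u:(u,v)\in E,\ i\le\ell(u)\le j\}$ (empty if $i>j$). For a vertex $x$ at level $i=\ell(x)$: $\mathcal{C}^+_x=\{\chi(y): y\in\mathcal{N}_x(i,L)\}$ and $\mathcal{C}_x=\mathcal{C}\setminus\mathcal{C}^+_x$. A color $c\in\mathcal{C}_x$ is blank for $x$ if no vertex of $\mathcal{N}_x(4,i-1)$ has color $c$, and unique for $x$ if exactly one vertex of $\mathcal{N}_x(4,i-1)$ has color $c$. $B_x$ and $U_x$ denote the sets of blank and unique colors for $x$, respectively. *)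

From HB Require Import structures.
From mathcomp Require Import all_boot all_order all_algebra.
Set Implicit Arguments. Unset Strict Implicit. Unset Printing Implicit Defensive.
Import Order.TTheory GRing.Theory Num.Theory.

(* Graph: vertex type T : finType, edge relation e : rel T (simple graph:
   symmetric and irreflexive).
   Coloring col : T -> 'I_(Delta.+1)  (colour c <-> paper's colour c+1). *)

Section Defs.
Variables (T : finType) (e : rel T) (lev : T -> nat).

Definition Nset (v : T) (i j : nat) : {set T} :=
  [set u | e u v & (i <= lev u <= j)%N].

Variables (Delta L : nat) (col : T -> 'I_Delta.+1).

Definition Cplus (x : T) : {set 'I_Delta.+1} :=
  [set col y | y in Nset x (lev x) L].

Definition Cx (x : T) : {set 'I_Delta.+1} := ~: Cplus x.

Definition lowcount (x : T) (c : 'I_Delta.+1) : nat :=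
  #|[set u in Nset x 4 (lev x).-1 | col u == c]|.

Definition blank (x : T) : {set 'I_Delta.+1} :=
  [set c in Cx x | lowcount x c == 0%N].

Definition unique (x : T) : {set 'I_Delta.+1} :=
  [set c in Cx x | lowcount x c == 1%N].

End Defs.

(* Write N = N_x(4,i-1).  The disjoint sets N and N_x(i,L) hold at most Delta
   neighbours of x, so |C_x| >= Delta + 1 - |N_x(i,L)| >= 1 + |N|.  A colour
   of C_x that is neither blank nor unique is carried by at least two vertices
   of N, so there are at most |N|/2 such colours; the remaining ones, at least
   1 + |N|/2, are blank or unique.  Neither the value of beta nor the symmetry
   of the graph plays a role. *)

From HB Require Import structures.
From mathcomp Require Import all_boot all_order all_algebra.
From mathcomp Require Import zify.
Import Order.TTheory GRing.Theory Num.Theory.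

Section BlankUniqueCount.
Variables (T : finType) (e : rel T) (lev : T -> nat).
Variables (Delta L : nat) (col : T -> 'I_Delta.+1) (x : T).

Local Notation Nlow := (Nset e lev x 4 (lev x).-1).
Local Notation Nhigh := (Nset e lev x (lev x) L).
Local Notation BU := (blank e lev L col x :|: unique e lev L col x).
Local Notation C := (Cx e lev L col x).

Lemma card_Nset_low_high : #|Nlow| + #|Nhigh| <= #|[set u | e u x]|.
Proof.
have disjoint_levels : Nlow :&: Nhigh = set0.
  apply/setP => u; rewrite /Nset !inE.
  by case: (e u x) => //=; lia.
rewrite -cardsUI disjoint_levels cards0 addn0 subset_leq_card //.
by apply/subsetP => u; rewrite /Nset !inE => /orP[] /andP[].
Qed.

Lemma card_Cx_Nset_high : Delta.+1 <= #|C| + #|Nhigh|.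
Proof.
rewrite /Cx cardsCs setCK card_ord.
have : #|Cplus e lev L col x| <= #|Nhigh| by exact: leq_imset_card.
have : #|Cplus e lev L col x| <= Delta.+1 by rewrite -[X in _ <= X]card_ord max_card.
lia.
Qed.

Lemma sum_lowcount : \sum_(c : 'I_Delta.+1) lowcount e lev col x c = #|Nlow|.
Proof.
rewrite -sum1_card (partition_big col predT) //=.
apply: eq_bigr => c _; rewrite /lowcount -sum1_card.
by apply: eq_bigl => u; rewrite !inE.
Qed.

Lemma blank_unique_sub_Cx : BU \subset C.
Proof. by apply/subsetP => c; rewrite !inE => /orP[] /andP[]. Qed.

Lemma lowcount_ge2 c : c \in C :\: BU -> 2 <= lowcount e lev col x c.
Proof. by rewrite !inE negb_or => /andP[/andP[]]; case: (c \in C) => //=; lia. Qed.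

Lemma card_Cx_not_blank_unique : 2 * #|C :\: BU| <= #|Nlow|.
Proof.
rewrite -sum_lowcount (bigID (mem (C :\: BU))) /= -sum1_card big_distrr /=.
apply: leq_trans (leq_addr _ _); apply: leq_sum => c /lowcount_ge2.
by rewrite muln1.
Qed.

Lemma card_blank_unique_nat (maxdeg_x : #|[set u | e u x]| <= Delta) :
  #|Nlow| + 2 <= 2 * #|BU|.
Proof.
have := card_Nset_low_high; have := card_Cx_Nset_high.
have := card_Cx_not_blank_unique.
rewrite cardsD (setIidPr blank_unique_sub_Cx).
have := subset_leq_card blank_unique_sub_Cx.
lia.
Qed.

End BlankUniqueCount.

Local Open Scope ring_scope.

Theorem claim2 (R : realFieldType) (T : finType) (e : rel T)
  (e_sym : symmetric e) (e_irr : irreflexive e)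
  (Delta : nat) (maxdeg : forall v : T, (#|[set u | e u v]| <= Delta)%N)
  (beta : R) (beta_gt : 20 < beta) (L : nat) (hL : beta ^+ L = Delta%:R)
  (lev : T -> nat) (hlev : forall v : T, (4 <= lev v <= L)%N)
  (col : T -> 'I_Delta.+1) (x : T) :
  1 + (#|Nset e lev x 4 (lev x).-1|)%:R / 2
    <= (#|blank e lev L col x :|: unique e lev L col x|)%:R :> R.
Proof.
have count := @card_blank_unique_nat T e lev Delta L col x (maxdeg x).
rewrite -(ler_pM2r (_ : 0 < 2%:R :> R)) // mulrDl mul1r mulfVK ?pnatr_eq0 //.
by rewrite -natrM -natrD ler_nat; lia.
Qed.
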